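(* Let $\gamma\ge1$ and fix $T>0$. Let $(h,u,v)\in C^1([0,T]\times\mathbb{R})$ with $h>0$ solve $$\partial_t h+h^2\partial_\xi u=0,\qquad \partial_t u+\partial_\xi\big(h^\gamma/\gamma\big)-v=0,\qquad \partial_t v+u=0,$$ with initial data $(h_0,u_0,v_0)$. Suppose $Z_0^\sharp$, $\omega_0^\sharp$, $\inf_\xi h_0$ and $\sup_\xi\{h_0,|u_0|,|v_0|\}$ are all finite and positive, and that $M_0:=\sup_{\xi\in\mathbb{R}}\{|R_1(0,\xi)|,|R_2(0,\xi)|,|R_3(0,\xi)|\}<\infty$. Then for every $t\in[0,T]$, $$\sup_{\xi\in\mathbb{R}}\{|R_1(t,\xi)|,|R_2(t,\xi)|,|R_3(t,\xi)|\}\le M_0e^t$$ and $$\sup_{\xi\in\mathbb{R}}h(t,\xi)\le \vartheta(M_0e^t)=\begin{cases}\big(\frac{\gamma-1}{2}M_0e^t+1\big)^{\frac{2}{\gamma-1}},&\gamma>1,\\ e^{M_0e^t},&\gamma=1.\end{cases}$$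
   Context: Riemann invariants: $\mathcal{K}(h)=\int_1^h s^{\frac{\gamma-3}{2}}\,ds$, $R_1=u-\mathcal{K}(h)$, $R_2=u+\mathcal{K}(h)$, $R_3=v$; $\vartheta=\mathcal{K}^{-1}$. Also $Z_j=\sqrt{h}\,\big[\partial_\xi u+(-1)^j h^{\frac{\gamma-3}{2}}\partial_\xi h\big]$ ($j=1,2$), $Z_0^\sharp=\sup_\xi\max_{i=1,2}Z_i(0,\xi)$, $\omega_0(\xi)=\frac{1}{h_0(\xi)}+v_0'(\xi)$, $\omega_0^\sharp=\sup_\xi\omega_0$. *)

From Stdlib Require Import Reals Lra.
From Coquelicot Require Import Coquelicot.
Open Scope R_scope.

Definition strip (T : R) (p : R * R) : Prop := 0 <= fst p <= T.

Definition cont_on_strip (T : R) (f : R -> R -> R) : Prop :=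
  forall t x, 0 <= t <= T ->
    filterlim (fun p : R * R => f (fst p) (snd p))
      (within (strip T) (locally (t, x))) (locally (f t x)).

Definition is_pderiv_t (T : R) (f ft : R -> R -> R) : Prop :=
  forall t x, 0 <= t <= T ->
    filterlim (fun s => (f s x - f t x) / (s - t))
      (within (fun s => 0 <= s <= T /\ s <> t) (locally t)) (locally (ft t x)).

Definition is_pderiv_x (T : R) (f fx : R -> R -> R) : Prop :=
  forall t x, 0 <= t <= T -> is_derive (fun y => f t y) x (fx t x).

Definition C1_strip (T : R) (f ft fx : R -> R -> R) : Prop :=
  is_pderiv_t T f ft /\ is_pderiv_x T f fx /\
  cont_on_strip T f /\ cont_on_strip T ft /\ cont_on_strip T fx.

Definition supR (g : R -> R) : Rbar := Lub_Rbar (fun y => exists x, y = g x).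
Definition infR (g : R -> R) : Rbar := Glb_Rbar (fun y => exists x, y = g x).

Definition Kfun (gamma h : R) : R :=
  RInt (fun s => Rpower s ((gamma - 3) / 2)) 1 h.

Definition RI1 (gamma : R) (h u : R -> R -> R) (t x : R) : R := u t x - Kfun gamma (h t x).
Definition RI2 (gamma : R) (h u : R -> R -> R) (t x : R) : R := u t x + Kfun gamma (h t x).
Definition RI3 (v : R -> R -> R) (t x : R) : R := v t x.

Definition Zj (gamma : R) (j : nat) (h hx ux : R -> R -> R) (t x : R) : R :=
  sqrt (h t x) * (ux t x + (-1) ^ j * Rpower (h t x) ((gamma - 3) / 2) * hx t x).

(* vartheta = K^{-1}, explicit formula as in the paper *)
Definition vartheta (gamma y : R) : R :=
  if Rlt_dec 1 gamma then Rpower ((gamma - 1) / 2 * y + 1) (2 / (gamma - 1))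
  else exp y.

(* Along the backward characteristics of speeds -h^((gamma+1)/2), h^((gamma+1)/2) and 0,
   the system gives d/dt (u - K(h)) = v, d/dt (u + K(h)) = v and d/dt v = -u, so every
   |R_i| grows at rate at most max_j |R_j|.  Compare max_j |R_j| with the barrier
   M0 e^s + eps e^(2s), whose growth rate exceeds its value, on a backward cone of
   dependence of (t, x) whose slope bounds the characteristic speeds (K(h) <= max_j |R_j|
   keeps h below vartheta of the barrier).  If the invariants reach the barrier,
   compactness of the cone gives a first touching point, and differentiating the touching
   invariant backward along its characteristic contradicts the faster growth of the
   barrier.  Letting eps -> 0 gives max_j |R_j| <= M0 e^t, and K(h) <= M0 e^t then gives
   h <= vartheta (M0 e^t). *)

From Stdlib Require Import Reals Lra Lia Classical ClassicalChoice.
From Coquelicot Require Import Coquelicot.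
Open Scope R_scope.

Definition Kclosed (gamma h : R) : R :=
  if Rlt_dec 1 gamma then 2 / (gamma - 1) * (Rpower h ((gamma - 1) / 2) - 1) else ln h.

Lemma is_derive_Rpower x p : 0 < x ->
  is_derive (fun y => Rpower y p) x (p * Rpower x (p - 1)).
Proof. intros Hx; apply is_derive_Reals, derivable_pt_lim_power; exact Hx. Qed.

Lemma is_derive_Kclosed gamma h : 1 <= gamma -> 0 < h ->
  is_derive (Kclosed gamma) h (Rpower h ((gamma - 3) / 2)).
Proof.
  intros Hg Hh. unfold Kclosed. destruct (Rlt_dec 1 gamma) as [Hg1 | Hg1].
  - replace (Rpower h ((gamma - 3) / 2)) with
      (2 / (gamma - 1) * ((gamma - 1) / 2 * Rpower h ((gamma - 1) / 2 - 1) - 0)).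
    + apply (is_derive_scal (fun z => Rpower z ((gamma - 1) / 2) - 1)).
      apply (is_derive_minus (fun z => Rpower z ((gamma - 1) / 2)) (fun _ => 1)).
      * apply is_derive_Rpower; exact Hh.
      * apply (is_derive_const (K := R_AbsRing) (V := R_NormedModule)).
    + replace ((gamma - 1) / 2 - 1) with ((gamma - 3) / 2) by field. field. lra.
  - replace gamma with 1 by lra. auto_derive; [exact Hh|].
    replace ((1 - 3) / 2) with (- (1)) by field.
    rewrite Rpower_Ropp, Rpower_1 by exact Hh. field. lra.
Qed.

Lemma Kfun_Kclosed gamma h : 1 <= gamma -> 0 < h -> Kfun gamma h = Kclosed gamma h.
Proof.
  intros Hg Hh. unfold Kfun.
  assert (Hbetween : forall z, Rmin 1 h <= z <= Rmax 1 h -> 0 < z).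
  { intros z Hz. assert (0 < Rmin 1 h) by (apply Rmin_pos; lra). lra. }
  rewrite (is_RInt_unique _ _ _ (Kclosed gamma h - Kclosed gamma 1)).
  - unfold Kclosed. destruct (Rlt_dec 1 gamma).
    + unfold Rpower. rewrite ln_1, Rmult_0_r, exp_0. ring.
    + rewrite ln_1. ring.
  - apply (is_RInt_derive (Kclosed gamma)).
    + intros z Hz. apply is_derive_Kclosed; auto.
    + intros z Hz. apply (ex_derive_continuous (K := R_AbsRing) (V := R_NormedModule)).
      eexists. apply is_derive_Rpower; auto.
Qed.

Lemma Kclosed_increasing gamma a b : 1 <= gamma -> 0 < a -> a < b ->
  Kclosed gamma a < Kclosed gamma b.
Proof.
  intros Hg Ha Hab. unfold Kclosed. destruct (Rlt_dec 1 gamma).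
  - apply Rmult_lt_compat_l; [apply Rdiv_lt_0_compat; lra|].
    assert (Rpower a ((gamma - 1) / 2) < Rpower b ((gamma - 1) / 2))
      by (apply Rlt_Rpower_l; lra).
    lra.
  - apply ln_increasing; assumption.
Qed.

Lemma Kclosed_vartheta gamma y : 1 <= gamma -> 0 <= y ->
  0 < vartheta gamma y /\ Kclosed gamma (vartheta gamma y) = y.
Proof.
  intros Hg Hy. unfold vartheta, Kclosed. destruct (Rlt_dec 1 gamma).
  - assert (Hbase : 0 < (gamma - 1) / 2 * y + 1).
    { assert (0 <= (gamma - 1) / 2 * y) by (apply Rmult_le_pos; lra). lra. }
    split; [apply exp_pos|].
    rewrite Rpower_mult.
    replace (2 / (gamma - 1) * ((gamma - 1) / 2)) with 1 by (field; lra).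
    rewrite Rpower_1 by exact Hbase. field. lra.
  - split; [apply exp_pos | apply ln_exp].
Qed.

Lemma le_vartheta gamma h y : 1 <= gamma -> 0 < h -> 0 <= y ->
  Kclosed gamma h <= y -> h <= vartheta gamma y.
Proof.
  intros Hg Hh Hy HK. destruct (Kclosed_vartheta gamma y Hg Hy) as [Hpos Hinv].
  destruct (Rle_or_lt h (vartheta gamma y)) as [|Hlt]; [assumption|].
  pose proof (Kclosed_increasing gamma _ _ Hg Hpos Hlt). lra.
Qed.

Lemma ball_R (x e y : R) : ball x e y <-> Rabs (y - x) < e.
Proof. reflexivity. Qed.

Lemma at_right_0_intro (P : R -> Prop) d : 0 < d ->
  (forall e, 0 < e < d -> P e) -> at_right 0 P.
Proof.
  intros Hd HP. exists (mkposreal d Hd). intros e He Hpos. apply HP.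
  change (Rabs (e - 0) < d) in He. rewrite Rminus_0_r, Rabs_pos_eq in He; lra.
Qed.

Lemma continuous_near f s : continuous f s ->
  forall eps, 0 < eps -> exists d, 0 < d /\
    forall z, Rabs (z - s) < d -> Rabs (f z - f s) < eps.
Proof.
  intros Hf eps Heps.
  destruct (proj1 (filterlim_locally f (f s)) Hf (mkposreal eps Heps)) as [d Hd].
  exists d. split; [apply cond_pos|]. intros z Hz. apply (Hd z), Hz.
Qed.

Lemma cont_on_strip_near T f s y : cont_on_strip T f -> 0 <= s <= T ->
  forall eps, 0 < eps -> exists d, 0 < d /\
    forall s' y', 0 <= s' <= T -> Rabs (s' - s) < d -> Rabs (y' - y) < d ->
      Rabs (f s' y' - f s y) < eps.
Proof.
  intros Hf Hs eps Heps. pose proof (Hf s y Hs) as Hlim.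
  destruct (proj1 (filterlim_locally _ _) Hlim (mkposreal eps Heps)) as [d Hd].
  exists d. split; [apply cond_pos|].
  intros s' y' Hs' Hds Hdy. apply (Hd (s', y')); [split; assumption | exact Hs'].
Qed.

Lemma filterlim_Rplus {T} {F} {FF : Filter F} (f g : T -> R) a b :
  filterlim f F (locally a) -> filterlim g F (locally b) ->
  filterlim (fun z => f z + g z) F (locally (a + b)).
Proof.
  intros Hf Hg. apply (filterlim_comp_2 f g Rplus Hf Hg).
  apply (@filterlim_plus R_AbsRing R_NormedModule).
Qed.

Lemma filterlim_Rmult {T} {F} {FF : Filter F} (f g : T -> R) a b :
  filterlim f F (locally a) -> filterlim g F (locally b) ->
  filterlim (fun z => f z * g z) F (locally (a * b)).
Proof.
  intros Hf Hg. apply (filterlim_comp_2 f g Rmult Hf Hg).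
  apply (@filterlim_mult R_AbsRing).
Qed.

Definition backward_quotient (f : R -> R -> R) (s y c e : R) : R :=
  (f s y - f (s - e) (y - c * e)) / e.

Lemma line_step_small c d e : 0 < d -> 0 < e < d / (Rabs c + 1) ->
  e < d /\ Rabs (c * e) < d.
Proof.
  intros Hd He. pose proof (Rabs_pos c) as Hc.
  assert (Hke : (Rabs c + 1) * e < d).
  { replace d with ((Rabs c + 1) * (d / (Rabs c + 1))) by (field; lra).
    apply Rmult_lt_compat_l; lra. }
  rewrite Rabs_mult, (Rabs_pos_eq e) by lra. split; nra.
Qed.

Lemma filterlim_backward_line T f s y c : cont_on_strip T f -> 0 < s <= T ->
  filterlim (fun e => f (s - e) (y - c * e)) (at_right 0) (locally (f s y)).
Proof.
  intros Hf Hs. apply filterlim_locally. intros eps.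
  destruct (cont_on_strip_near T f s y Hf ltac:(lra) eps (cond_pos eps)) as [d [Hd Hnear]].
  assert (Hdc : 0 < d / (Rabs c + 1))
    by (apply Rdiv_lt_0_compat; [lra | pose proof (Rabs_pos c); lra]).
  apply (at_right_0_intro _ (Rmin s (d / (Rabs c + 1)))); [apply Rmin_pos; lra|].
  intros e He. pose proof (Rmin_l s (d / (Rabs c + 1))).
  pose proof (Rmin_r s (d / (Rabs c + 1))).
  destruct (line_step_small c d e Hd) as [Hed Hced]; [lra|].
  apply ball_R. apply Hnear.
  - lra.
  - replace (s - e - s) with (- e) by ring. rewrite Rabs_Ropp, Rabs_pos_eq; lra.
  - replace (y - c * e - y) with (- (c * e)) by ring. rewrite Rabs_Ropp. exact Hced.
Qed.

Lemma backward_time_quotient T f ft s y : is_pderiv_t T f ft -> 0 < s <= T ->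
  filterlim (fun e => (f s y - f (s - e) y) / e) (at_right 0) (locally (ft s y)).
Proof.
  intros Hft Hs.
  apply (filterlim_ext_loc (fun e => (f (s - e) y - f s y) / (s - e - s))).
  - apply (at_right_0_intro _ 1); [lra|]. intros e He. field. lra.
  - apply (filterlim_comp _ _ _ (fun e => s - e) (fun s' => (f s' y - f s y) / (s' - s))
             _ (within (fun s' => 0 <= s' <= T /\ s' <> s) (locally s)));
      [|apply (Hft s y); lra].
    intros P [d HP]. apply (at_right_0_intro _ (Rmin d s)).
    { apply Rmin_pos; [apply cond_pos | lra]. }
    intros e He. pose proof (Rmin_l d s). pose proof (Rmin_r d s).
    apply HP; [|split; lra].
    apply ball_R. replace (s - e - s) with (- e) by ring.
    rewrite Rabs_Ropp, Rabs_pos_eq; lra.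
Qed.

Lemma between_dist a b z : Rmin a b <= z <= Rmax a b -> Rabs (z - b) <= Rabs (a - b).
Proof.
  unfold Rmin, Rmax. intros Hz.
  destruct (Rle_dec a b); unfold Rabs; repeat destruct Rcase_abs; lra.
Qed.

Lemma backward_space_quotient T f fx s y c :
  is_pderiv_x T f fx -> cont_on_strip T fx -> 0 < s <= T ->
  filterlim (fun e => (f (s - e) y - f (s - e) (y - c * e)) / e) (at_right 0)
    (locally (c * fx s y)).
Proof.
  intros Hfx Hcont Hs. apply filterlim_locally. intros eps.
  pose proof (Rabs_pos c) as Hc. pose proof (cond_pos eps) as Heps.
  set (k := Rabs c + 1).
  destruct (cont_on_strip_near T fx s y Hcont ltac:(lra) (eps / k)) as [d [Hd Hnear]].
  { apply Rdiv_lt_0_compat; unfold k; lra. }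
  assert (Hdk : 0 < d / k) by (apply Rdiv_lt_0_compat; unfold k; lra).
  apply (at_right_0_intro _ (Rmin s (d / k))); [apply Rmin_pos; lra|].
  intros e He. pose proof (Rmin_l s (d / k)). pose proof (Rmin_r s (d / k)).
  destruct (line_step_small c d e Hd) as [Hed Hced]; [unfold k in *; lra|].
  assert (Hse : 0 <= s - e <= T) by lra.
  destruct (MVT_gen (fun z => f (s - e) z) (y - c * e) y (fx (s - e))) as [z [Hz Hmvt]].
  { intros z _. apply Hfx, Hse. }
  { intros z _. apply derivable_continuous_pt. exists (fx (s - e) z).
    apply is_derive_Reals, Hfx, Hse. }
  assert (Hfxz : Rabs (fx (s - e) z - fx s y) < eps / k).
  { apply Hnear; [exact Hse | |].
    - replace (s - e - s) with (- e) by ring. rewrite Rabs_Ropp, Rabs_pos_eq; lra.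
    - apply between_dist in Hz.
      replace (y - c * e - y) with (- (c * e)) in Hz by ring. rewrite Rabs_Ropp in Hz. lra. }
  apply ball_R. cbv beta in Hmvt |- *. rewrite Hmvt.
  replace (fx (s - e) z * (y - (y - c * e)) / e - c * fx s y)
    with (c * (fx (s - e) z - fx s y)) by (field; lra).
  rewrite Rabs_mult.
  assert (Hkeps : k * (eps / k) = eps) by (field; unfold k; lra).
  pose proof (Rabs_pos (fx (s - e) z - fx s y)). unfold k in *. nra.
Qed.

Lemma backward_quotient_C1 T f ft fx s y c : C1_strip T f ft fx -> 0 < s <= T ->
  filterlim (backward_quotient f s y c) (at_right 0) (locally (ft s y + c * fx s y)).
Proof.
  intros (Hft & Hfx & _ & _ & Hcx) Hs.
  apply (filterlim_ext
    (fun e => (f s y - f (s - e) y) / e + (f (s - e) y - f (s - e) (y - c * e)) / e)).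
  - intros e. unfold backward_quotient, Rdiv. ring.
  - apply filterlim_Rplus;
      [apply (backward_time_quotient T) | apply (backward_space_quotient T)]; assumption.
Qed.

(* Caratheodory's form of differentiability: it turns the chain rule for one-sided
   difference quotients into a product of limits. *)
Definition slope (g : R -> R) (a dg z : R) : R :=
  if Req_EM_T z a then dg else (g z - g a) / (z - a).

Lemma slope_continuous g a dg : is_derive g a dg ->
  filterlim (slope g a dg) (locally a) (locally dg).
Proof.
  intros Hg. apply is_derive_Reals in Hg. apply filterlim_locally. intros eps.
  destruct (Hg eps (cond_pos eps)) as [d Hd].
  exists d. intros z Hz. change (Rabs (z - a) < d) in Hz.
  apply ball_R. unfold slope. destruct (Req_EM_T z a) as [_ | Hza].
  - rewrite Rminus_eq_0, Rabs_R0. apply cond_pos.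
  - specialize (Hd (z - a) ltac:(lra) Hz).
    rewrite Rplus_minus in Hd. exact Hd.
Qed.

Lemma slope_mul g a dg z : g a - g z = slope g a dg z * (a - z).
Proof.
  unfold slope. destruct (Req_EM_T z a) as [-> | Hza].
  - ring.
  - field. lra.
Qed.

Lemma backward_quotient_comp T f ft fx g dg s y c :
  C1_strip T f ft fx -> 0 < s <= T -> is_derive g (f s y) dg ->
  filterlim (backward_quotient (fun s y => g (f s y)) s y c) (at_right 0)
    (locally (dg * (ft s y + c * fx s y))).
Proof.
  intros Hf Hs Hg.
  apply (filterlim_ext
    (fun e => slope g (f s y) dg (f (s - e) (y - c * e)) * backward_quotient f s y c e)).
  - intros e. unfold backward_quotient.
    rewrite (slope_mul g (f s y) dg (f (s - e) (y - c * e))). unfold Rdiv. ring.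
  - apply filterlim_Rmult.
    + eapply filterlim_comp; [|apply slope_continuous, Hg].
      apply (filterlim_backward_line T); [apply Hf | exact Hs].
    + apply (backward_quotient_C1 T); assumption.
Qed.

Lemma filterlim_backward_time s :
  filterlim (fun e => s - e) (at_right 0) (locally s).
Proof.
  intros P [d HP]. apply (at_right_0_intro _ d); [apply cond_pos|].
  intros e He. apply HP, ball_R.
  replace (s - e - s) with (- e) by ring. rewrite Rabs_Ropp, Rabs_pos_eq; lra.
Qed.

Lemma is_derive_backward_quotient g s dg : is_derive g s dg ->
  filterlim (fun e => (g s - g (s - e)) / e) (at_right 0) (locally dg).
Proof.
  intros Hg. apply (filterlim_ext_loc (fun e => slope g s dg (s - e))).
  - apply (at_right_0_intro _ 1); [lra|]. intros e He.
    rewrite (slope_mul g s dg (s - e)). field. lra.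
  - eapply filterlim_comp; [apply filterlim_backward_time | apply slope_continuous, Hg].
Qed.

Lemma touching_slope_ge (F W : R -> R -> R) (phi : R -> R) (dphi m y c g : R) :
  is_derive phi m dphi -> F m y = phi m ->
  at_right 0 (fun e => F (m - e) (y - c * e) <= phi (m - e)) ->
  (forall s y, Rabs (W s y) <= F s y) -> Rabs (W m y) = F m y ->
  filterlim (backward_quotient W m y c) (at_right 0) (locally g) ->
  dphi <= Rabs g.
Proof.
  intros Hphi Htouch Hbelow HW Hmax Hg.
  change (Rbar_le dphi (Rabs g)).
  apply (filterlim_le (F := at_right 0) (fun e => (phi m - phi (m - e)) / e)
           (fun e => Rabs (backward_quotient W m y c e))).
  - apply (filter_imp (fun e => F (m - e) (y - c * e) <= phi (m - e) /\ 0 < e));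
      [|apply filter_and; [exact Hbelow | apply (at_right_0_intro _ 1); [lra | intros; lra]]].
    intros e [Hle He]. unfold backward_quotient, Rdiv.
    rewrite Rabs_mult, Rabs_inv, (Rabs_pos_eq e) by lra.
    apply Rmult_le_compat_r; [left; apply Rinv_0_lt_compat, He|].
    pose proof (Rabs_triang_inv (W m y) (W (m - e) (y - c * e))).
    pose proof (HW (m - e) (y - c * e)). lra.
  - apply is_derive_backward_quotient, Hphi.
  - apply (filterlim_comp _ _ _ _ Rabs _ _ _ Hg (continuous_Rabs g)).
Qed.

(* With [a = u], [b = K(h)] and [c = v] this is [max (|R1|, |R2|, |R3|)]. *)
Definition invariants_max (a b c : R) : R :=
  Rmax (Rabs (a - b)) (Rmax (Rabs (a + b)) (Rabs c)).

Lemma invariants_max_ge a b c :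
  Rabs (a - b) <= invariants_max a b c /\ Rabs (a + b) <= invariants_max a b c /\
  Rabs c <= invariants_max a b c.
Proof.
  unfold invariants_max, Rmax. repeat destruct Rle_dec; repeat split; lra.
Qed.

Lemma invariants_max_attained a b c :
  invariants_max a b c = Rabs (a - b) \/ invariants_max a b c = Rabs (a + b) \/
  invariants_max a b c = Rabs c.
Proof.
  unfold invariants_max, Rmax. repeat destruct Rle_dec; tauto.
Qed.

Lemma Rabs_le_invariants_max a b c :
  Rabs a <= invariants_max a b c /\ Rabs b <= invariants_max a b c.
Proof.
  destruct (invariants_max_ge a b c) as (Hm & Hp & _).
  revert Hm Hp. unfold Rabs. repeat destruct Rcase_abs; lra.
Qed.

Lemma le_invariants_max_mid a b c : b <= invariants_max a b c.
Proof. eapply Rle_trans; [apply Rle_abs | apply Rabs_le_invariants_max]. Qed.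

Lemma invariants_max_nonneg a b c : 0 <= invariants_max a b c.
Proof.
  destruct (invariants_max_ge a b c) as (_ & _ & Hc).
  pose proof (Rabs_pos c). lra.
Qed.

Lemma Rmax_lipschitz a b a' b' : Rabs (Rmax a b - Rmax a' b') <= Rabs (a - a') + Rabs (b - b').
Proof.
  unfold Rmax. repeat destruct Rle_dec; unfold Rabs; repeat destruct Rcase_abs; lra.
Qed.

Lemma invariants_max_lipschitz a b c a' b' c' :
  Rabs (invariants_max a b c - invariants_max a' b' c')
    <= 2 * Rabs (a - a') + 2 * Rabs (b - b') + Rabs (c - c').
Proof.
  unfold invariants_max.
  eapply Rle_trans; [apply Rmax_lipschitz|].
  eapply Rle_trans; [apply Rplus_le_compat_l, Rmax_lipschitz|].
  pose proof (Rabs_triang_inv2 (a - b) (a' - b')) as Hm.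
  pose proof (Rabs_triang_inv2 (a + b) (a' + b')) as Hp.
  pose proof (Rabs_triang_inv2 c c').
  replace (a - b - (a' - b')) with (a - a' + - (b - b')) in Hm by ring.
  replace (a + b - (a' + b')) with (a - a' + (b - b')) in Hp by ring.
  pose proof (Rabs_triang (a - a') (- (b - b'))).
  pose proof (Rabs_triang (a - a') (b - b')).
  rewrite Rabs_Ropp in *. lra.
Qed.

Lemma cont_on_strip_invariants_max T a b c :
  cont_on_strip T a -> cont_on_strip T b -> cont_on_strip T c ->
  cont_on_strip T (fun s y => invariants_max (a s y) (b s y) (c s y)).
Proof.
  intros Ha Hb Hc s y Hs. apply filterlim_locally. intros eps.
  pose proof (cond_pos eps) as Heps.
  assert (Hnear : forall f, cont_on_strip T f ->
    within (strip T) (locally (s, y)) (fun p => Rabs (f (fst p) (snd p) - f s y) < eps / 5)).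
  { intros f Hf.
    apply (proj1 (filterlim_locally _ _) (Hf s y Hs) (mkposreal (eps / 5) ltac:(lra))). }
  apply (filter_imp (fun p => Rabs (a (fst p) (snd p) - a s y) < eps / 5 /\
                              Rabs (b (fst p) (snd p) - b s y) < eps / 5 /\
                              Rabs (c (fst p) (snd p) - c s y) < eps / 5)).
  - intros p (Hap & Hbp & Hcp). apply ball_R.
    eapply Rle_lt_trans; [apply invariants_max_lipschitz | lra].
  - repeat apply filter_and; apply Hnear; assumption.
Qed.

Lemma exists_inf (B : R -> Prop) s0 : B s0 -> (forall s, B s -> 0 <= s) ->
  exists m, 0 <= m /\ (forall s, B s -> m <= s) /\
    (forall d, 0 < d -> exists s, B s /\ s < m + d).
Proof.
  intros Hs0 Hpos.
  destruct (completeness (fun r => forall s, B s -> r <= s)) as [m [Hub Hlub]].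
  - exists s0. intros r Hr. apply Hr, Hs0.
  - exists 0. exact Hpos.
  - exists m. split; [apply Hub, Hpos|]. split.
    + intros s Hs. apply Hlub. intros r Hr. apply Hr, Hs.
    + intros d Hd. apply NNPP. intros Hnone.
      assert (m + d <= m); [|lra].
      apply Hub. intros s Hs. destruct (Rle_or_lt (m + d) s) as [|Hlt]; [assumption|].
      exfalso. apply Hnone. exists s. split; assumption.
Qed.

Section Cone.

Variables T t x L : R.
Hypotheses (HtT : t <= T) (HL : 0 <= L).

Definition in_cone (s y : R) : Prop := 0 <= s <= t /\ Rabs (y - x) <= L * (t - s).

Lemma in_cone_backward m y c e : in_cone m y -> Rabs c <= L -> 0 < e <= m ->
  in_cone (m - e) (y - c * e).
Proof.
  intros [Hm Hy] Hc He. split; [lra|].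
  replace (y - c * e - x) with ((y - x) + - (c * e)) by ring.
  eapply Rle_trans; [apply Rabs_triang|].
  rewrite Rabs_Ropp, Rabs_mult, (Rabs_pos_eq e) by lra.
  assert (Rabs c * e <= L * e) by (apply Rmult_le_compat_r; lra). nra.
Qed.

Lemma bad_point_limit (F : R -> R -> R) (phi : R -> R) m r (sn yn : nat -> R) :
  cont_on_strip T F -> continuous phi m -> 0 <= m <= T ->
  (forall n, m <= sn n <= T /\ sn n < m + / INR (S n)) ->
  (forall n, Rabs (yn n - x) <= r) ->
  (forall n, phi (sn n) <= F (sn n) (yn n)) ->
  exists l, Rabs (l - x) <= r /\ phi m <= F m l.
Proof.
  intros HF Hphi Hm Hsn Hyn Hbad.
  destruct (Bolzano_Weierstrass yn (fun z => x - r <= z <= x + r) (compact_P3 _ _)) as [l Hl].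
  { intros n. specialize (Hyn n). revert Hyn. unfold Rabs. destruct Rcase_abs; lra. }
  exists l. split.
  - destruct (Rle_or_lt (Rabs (l - x)) r) as [|Hfar]; [assumption|exfalso].
    assert (Hgap : 0 < Rabs (l - x) - r) by lra.
    destruct (Hl (fun z => Rabs (z - l) < Rabs (l - x) - r) 0%nat) as [p [_ Hp]].
    { exists (mkposreal _ Hgap). intros z Hz. exact Hz. }
    pose proof (Hyn p). pose proof (Rabs_triang (l - yn p) (yn p - x)) as Htri.
    replace (l - yn p + (yn p - x)) with (l - x) in Htri by ring.
    rewrite (Rabs_minus_sym l (yn p)) in Htri. lra.
  - destruct (Rle_or_lt (phi m) (F m l)) as [|Hlt]; [assumption|exfalso].
    set (gap := phi m - F m l).
    destruct (cont_on_strip_near T F m l HF Hm (gap / 2)) as [d1 [Hd1 HF1]];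
      [unfold gap; lra|].
    destruct (continuous_near phi m Hphi (gap / 2)) as [d2 [Hd2 Hphi2]]; [unfold gap; lra|].
    assert (Hd : 0 < Rmin d1 d2) by (apply Rmin_pos; assumption).
    pose proof (Rmin_l d1 d2). pose proof (Rmin_r d1 d2).
    destruct (archimed_cor1 (Rmin d1 d2) Hd) as [N [HN HN0]].
    destruct (Hl (fun z => Rabs (z - l) < Rmin d1 d2) N) as [p [HpN Hp]].
    { exists (mkposreal _ Hd). intros z Hz. exact Hz. }
    destruct (Hsn p) as [Hsp Hsp'].
    assert (Hstep : / INR (S p) <= / INR N).
    { apply Rinv_le_contravar; [apply lt_0_INR; exact HN0 | apply le_INR; lia]. }
    specialize (HF1 (sn p) (yn p) ltac:(lra)
                  ltac:(rewrite Rabs_pos_eq; lra) ltac:(cbv beta in Hp; lra)).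
    specialize (Hphi2 (sn p) ltac:(rewrite Rabs_pos_eq; lra)).
    pose proof (Hbad p).
    apply Rabs_def2 in HF1. apply Rabs_def2 in Hphi2. unfold gap in *. lra.
Qed.

Lemma first_bad_point (F : R -> R -> R) (phi : R -> R) :
  cont_on_strip T F -> (forall s, continuous phi s) ->
  (exists s y, in_cone s y /\ phi s <= F s y) ->
  exists m y, in_cone m y /\ phi m <= F m y /\
    forall s y', in_cone s y' -> phi s <= F s y' -> m <= s.
Proof.
  intros HF Hphi [s0 [y0 Hbad0]].
  destruct (exists_inf (fun s => exists y, in_cone s y /\ phi s <= F s y) s0)
    as [m (Hm0 & Hlow & Happrox)].
  { exists y0. exact Hbad0. }
  { intros s [y [[Hs _] _]]. lra. }
  assert (Hmt : m <= t).
  { apply Rle_trans with s0; [apply Hlow; exists y0; exact Hbad0 | apply Hbad0]. }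
  assert (Hseq : forall n, exists p : R * R,
    in_cone (fst p) (snd p) /\ phi (fst p) <= F (fst p) (snd p) /\ fst p < m + / INR (S n)).
  { intros n. destruct (Happrox (/ INR (S n))) as [s [[y Hy] Hs]].
    { apply Rinv_0_lt_compat, lt_0_INR. lia. }
    exists (s, y). simpl. tauto. }
  destruct (choice _ Hseq) as [pts Hpts].
  assert (Hpts_low : forall n, m <= fst (pts n)).
  { intros n. apply Hlow. exists (snd (pts n)). split; apply Hpts. }
  destruct (bad_point_limit F phi m (L * (t - m)) (fun n => fst (pts n)) (fun n => snd (pts n)))
    as [l [Hl Hbadl]].
  - exact HF.
  - apply Hphi.
  - lra.
  - intros n. destruct (Hpts n) as [[Hc _] [_ Hs]]. specialize (Hpts_low n). split; lra.
  - intros n. destruct (Hpts n) as [[_ Hc] _]. eapply Rle_trans; [exact Hc|].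
    specialize (Hpts_low n). apply Rmult_le_compat_l; lra.
  - intros n. apply Hpts.
  - exists m, l. split; [split; [lra | exact Hl]|]. split; [exact Hbadl|].
    intros s y' Hs Hbad. apply Hlow. exists y'. split; assumption.
Qed.

Lemma first_touch (F : R -> R -> R) (phi : R -> R) :
  cont_on_strip T F -> (forall s, continuous phi s) ->
  (forall y, F 0 y < phi 0) -> (exists s y, in_cone s y /\ phi s <= F s y) ->
  exists m y, 0 < m /\ in_cone m y /\ F m y = phi m /\
    forall s y', 0 <= s < m -> Rabs (y' - x) <= L * (t - s) -> F s y' < phi s.
Proof.
  intros HF Hphi H0 Hbad.
  destruct (first_bad_point F phi HF Hphi Hbad) as (m & l & [Hm Hl] & Hbadl & Hfirst).
  assert (Hmpos : 0 < m).
  { destruct (Rle_lt_or_eq_dec 0 m (proj1 Hm)) as [|<-]; [assumption|].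
    specialize (H0 l). lra. }
  assert (Hbefore : forall s y', 0 <= s < m -> Rabs (y' - x) <= L * (t - s) ->
                      F s y' < phi s).
  { intros s y' Hs Hy'. destruct (Rlt_or_le (F s y') (phi s)) as [|Hge]; [assumption|].
    assert (m <= s) by (apply (Hfirst s y'); [split; [lra | exact Hy'] | exact Hge]).
    lra. }
  exists m, l. split; [exact Hmpos|]. split; [split; assumption|]. split; [|exact Hbefore].
  apply Rle_antisym; [|exact Hbadl].
  change (Rbar_le (F m l) (phi m)).
  apply (filterlim_le (F := at_right 0)
           (fun e => F (m - e) (l - 0 * e)) (fun e => phi (m - e))).
  - apply (at_right_0_intro _ m Hmpos). intros e He. left. apply Hbefore; [lra|].
    rewrite Rmult_0_l, Rminus_0_r. eapply Rle_trans; [exact Hl|].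
    apply Rmult_le_compat_l; lra.
  - apply (filterlim_backward_line T); [exact HF | lra].
  - apply (filterlim_comp _ _ _ (fun e => m - e) phi _ (locally m));
      [apply filterlim_backward_time | apply Hphi].
Qed.

End Cone.

Definition barrier (M0 eps s : R) : R := M0 * exp s + eps * exp (2 * s).

Lemma is_derive_barrier M0 eps s :
  is_derive (barrier M0 eps) s (barrier M0 eps s + eps * exp (2 * s)).
Proof. unfold barrier. auto_derive; [exact I | ring]. Qed.

Lemma barrier_le M0 eps a b : 0 <= M0 -> 0 <= eps -> a <= b ->
  barrier M0 eps a <= barrier M0 eps b.
Proof.
  intros HM Heps Hab. unfold barrier.
  assert (Hexp : forall p q, p <= q -> exp p <= exp q).
  { intros p q Hpq. destruct (Req_dec p q) as [-> | Hne]; [lra|].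
    left. apply exp_increasing. lra. }
  pose proof (Hexp a b Hab). pose proof (Hexp (2 * a) (2 * b) ltac:(lra)).
  apply Rplus_le_compat; apply Rmult_le_compat_l; assumption.
Qed.

Lemma Rpower_speed_identities H gamma : 0 < H ->
  Rpower H ((gamma - 3) / 2) * H ^ 2 = Rpower H ((gamma + 1) / 2) /\
  Rpower H ((gamma - 3) / 2) * Rpower H ((gamma + 1) / 2) = Rpower H (gamma - 1).
Proof.
  intros HH. rewrite <- (Rpower_pow 2 H HH), <- !Rpower_plus.
  split; f_equal; simpl; field.
Qed.

Section Euler_system.

Variables (gamma T : R) (h u v ht hx ut ux vt vx : R -> R -> R).
Hypotheses (Hgamma : 1 <= gamma)
  (Ch : C1_strip T h ht hx) (Cu : C1_strip T u ut ux) (Cv : C1_strip T v vt vx)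
  (Hpos : forall t x, 0 <= t <= T -> 0 < h t x)
  (Hmass : forall t x, 0 <= t <= T -> ht t x + (h t x) ^ 2 * ux t x = 0)
  (Hmomentum : forall t x, 0 <= t <= T ->
     ut t x + Derive (fun y => Rpower (h t y) gamma / gamma) x - v t x = 0)
  (Hrotation : forall t x, 0 <= t <= T -> vt t x + u t x = 0).

Local Notation Kh s y := (Kclosed gamma (h s y)).
Local Notation Fmax s y := (invariants_max (u s y) (Kh s y) (v s y)).
Local Notation speed s y := (Rpower (h s y) ((gamma + 1) / 2)).

Lemma Derive_hpow_gamma s y : 0 <= s <= T ->
  Derive (fun z => Rpower (h s z) gamma / gamma) y = Rpower (h s y) (gamma - 1) * hx s y.
Proof.
  intros Hs. apply is_derive_unique.
  assert (Hf : is_derive (fun z => Rpower z gamma / gamma) (h s y)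
                         (Rpower (h s y) (gamma - 1))).
  { apply (is_derive_ext (fun z => / gamma * Rpower z gamma)).
    { intros z. unfold Rdiv. apply Rmult_comm. }
    replace (Rpower (h s y) (gamma - 1))
      with (/ gamma * (gamma * Rpower (h s y) (gamma - 1))) by (field; lra).
    apply (is_derive_scal (fun z => Rpower z gamma)), is_derive_Rpower, Hpos, Hs. }
  pose proof (is_derive_comp _ (fun z => h s z) y _ _ Hf (proj1 (proj2 Ch) s y Hs)) as Hcomp.
  simpl in Hcomp. unfold scal in Hcomp; simpl in Hcomp; unfold mult in Hcomp; simpl in Hcomp.
  rewrite Rmult_comm. exact Hcomp.
Qed.

Lemma cont_on_strip_invariants : cont_on_strip T (fun s y => Fmax s y).
Proof.
  apply cont_on_strip_invariants_max; [apply Cu | | apply Cv].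
  intros s y Hs.
  apply (filterlim_comp _ _ _ (fun p => h (fst p) (snd p)) (Kclosed gamma) _ (locally (h s y))).
  - apply Ch, Hs.
  - apply (ex_derive_continuous (K := R_AbsRing) (V := R_NormedModule)).
    eexists. apply is_derive_Kclosed; [exact Hgamma | apply Hpos, Hs].
Qed.

(* [sigma = -1] and [sigma = 1] give [R1] and [R2] along their characteristic speeds. *)
Lemma backward_quotient_u_K sigma s y : sigma = 1 \/ sigma = -1 -> 0 < s <= T ->
  filterlim (backward_quotient (fun s y => u s y + sigma * Kh s y) s y (sigma * speed s y))
    (at_right 0) (locally (v s y)).
Proof.
  intros Hsigma Hs. set (c := sigma * speed s y).
  assert (Hs' : 0 <= s <= T) by lra.
  destruct (Rpower_speed_identities (h s y) gamma (Hpos s y Hs')) as [Hid1 Hid2].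
  apply (filterlim_ext (fun e => backward_quotient u s y c e
          + sigma * backward_quotient (fun s y => Kh s y) s y c e)).
  { intros e. unfold backward_quotient, Rdiv. ring. }
  replace (v s y) with ((ut s y + c * ux s y)
      + sigma * (Rpower (h s y) ((gamma - 3) / 2) * (ht s y + c * hx s y))).
  - apply filterlim_Rplus; [apply (backward_quotient_C1 T); assumption|].
    apply filterlim_Rmult; [apply filterlim_const|].
    apply (backward_quotient_comp T h ht hx); [exact Ch | exact Hs |].
    apply is_derive_Kclosed; [exact Hgamma | apply Hpos, Hs'].
  - pose proof (Hmass s y Hs') as Hm. pose proof (Hmomentum s y Hs') as Hmom.
    rewrite Derive_hpow_gamma, <- Hid2 in Hmom by exact Hs'.
    unfold c. set (k := Rpower (h s y) ((gamma - 3) / 2)) in *. set (lam := speed s y) in *.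
    replace (ht s y) with (- (h s y ^ 2 * ux s y)) by lra.
    replace (ut s y) with (v s y - k * lam * hx s y) by lra.
    rewrite <- Hid1. destruct Hsigma as [-> | ->]; ring.
Qed.

Lemma backward_quotient_v s y : 0 < s <= T ->
  filterlim (backward_quotient v s y 0) (at_right 0) (locally (- u s y)).
Proof.
  intros Hs. replace (- u s y) with (vt s y + 0 * vx s y).
  - apply (backward_quotient_C1 T); assumption.
  - pose proof (Hrotation s y ltac:(lra)). lra.
Qed.

Lemma speed_le_vartheta s y B : 0 <= s <= T -> Fmax s y <= B ->
  speed s y <= Rpower (vartheta gamma B) ((gamma + 1) / 2).
Proof.
  intros Hs HB. pose proof (invariants_max_nonneg (u s y) (Kh s y) (v s y)).
  apply Rle_Rpower_l; [lra|]. split; [apply Hpos, Hs|].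
  apply le_vartheta; [exact Hgamma | apply Hpos, Hs | lra |].
  eapply Rle_trans; [apply le_invariants_max_mid | exact HB].
Qed.

Lemma no_touching (phi : R -> R) (dphi m y : R) :
  0 < m <= T -> is_derive phi m dphi -> phi m < dphi -> Fmax m y = phi m ->
  (forall c, Rabs c <= speed m y ->
     at_right 0 (fun e => Fmax (m - e) (y - c * e) <= phi (m - e))) ->
  False.
Proof.
  intros Hm Hphi Hgrow Htouch Hbelow.
  assert (Hslope : forall (W : R -> R -> R) (c g : R), Rabs c <= speed m y ->
    (forall s y, Rabs (W s y) <= Fmax s y) -> Rabs (W m y) = Fmax m y ->
    filterlim (backward_quotient W m y c) (at_right 0) (locally g) ->
    Rabs g <= Fmax m y -> False).
  { intros W c g Hc HW Hmax Hg Hgle.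
    pose proof (touching_slope_ge _ W phi dphi m y c g Hphi Htouch (Hbelow c Hc) HW Hmax Hg).
    lra. }
  assert (Hspeed : 0 <= speed m y) by (unfold Rpower; left; apply exp_pos).
  pose proof (invariants_max_ge (u m y) (Kh m y) (v m y)) as (_ & _ & Hv).
  destruct (invariants_max_attained (u m y) (Kh m y) (v m y)) as [Hmax | [Hmax | Hmax]].
  - apply (Hslope (fun s y => u s y + -1 * Kh s y) (-1 * speed m y) (v m y)).
    + rewrite Rabs_mult, (Rabs_left (-1)), (Rabs_pos_eq (speed m y)); lra.
    + intros s' y'. replace (u s' y' + -1 * Kh s' y') with (u s' y' - Kh s' y') by ring.
      apply invariants_max_ge.
    + replace (u m y + -1 * Kh m y) with (u m y - Kh m y) by ring. lra.
    + apply backward_quotient_u_K; [right; reflexivity | exact Hm].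
    + exact Hv.
  - apply (Hslope (fun s y => u s y + 1 * Kh s y) (1 * speed m y) (v m y)).
    + rewrite Rmult_1_l, Rabs_pos_eq; lra.
    + intros s' y'. rewrite Rmult_1_l. apply invariants_max_ge.
    + rewrite Rmult_1_l. lra.
    + apply backward_quotient_u_K; [left; reflexivity | exact Hm].
    + exact Hv.
  - apply (Hslope v 0 (- u m y)).
    + rewrite Rabs_R0. exact Hspeed.
    + intros s' y'. apply invariants_max_ge.
    + lra.
    + apply backward_quotient_v, Hm.
    + rewrite Rabs_Ropp. apply Rabs_le_invariants_max.
Qed.

Lemma invariants_max_below_barrier M0 eps t x : 0 < eps -> (forall y, Fmax 0 y <= M0) ->
  0 <= t <= T -> Fmax t x < barrier M0 eps t.
Proof.
  intros Heps H0 Ht.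
  assert (HM0 : 0 <= M0).
  { eapply Rle_trans; [apply invariants_max_nonneg | apply (H0 0)]. }
  set (phi := barrier M0 eps).
  (* Below the barrier up to time [t], [K(h) <= phi t], so [L] bounds the characteristic
     speeds. *)
  set (L := Rpower (vartheta gamma (phi t)) ((gamma + 1) / 2)).
  destruct (Rlt_or_le (Fmax t x) (phi t)) as [|Hbad]; [assumption | exfalso].
  destruct (first_touch T t x L ltac:(lra) ltac:(unfold L, Rpower; left; apply exp_pos)
              (fun s y => Fmax s y) phi)
    as (m & y & Hm & Hcone & Htouch & Hbefore).
  - exact cont_on_strip_invariants.
  - intros s. apply (ex_derive_continuous (K := R_AbsRing) (V := R_NormedModule)).
    eexists. apply is_derive_barrier.
  - intros y. eapply Rle_lt_trans; [apply H0|].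
    unfold phi, barrier. rewrite Rmult_0_r, exp_0. lra.
  - exists t, x. split; [split; [lra|] | exact Hbad].
    rewrite !Rminus_diag, Rabs_R0, Rmult_0_r. lra.
  - assert (Hspeed : speed m y <= L).
    { apply speed_le_vartheta; [destruct Hcone; lra|].
      rewrite Htouch. apply barrier_le; [exact HM0 | lra | apply Hcone]. }
    apply (no_touching phi (phi m + eps * exp (2 * m)) m y).
    + destruct Hcone; lra.
    + apply is_derive_barrier.
    + pose proof (exp_pos (2 * m)). nra.
    + exact Htouch.
    + intros c Hc. apply (at_right_0_intro _ m Hm). intros e He. left.
      destruct (in_cone_backward t x L m y c e Hcone ltac:(lra) ltac:(lra)) as [_ Hy].
      apply Hbefore; [lra | exact Hy].
Qed.

Lemma invariants_max_le_exp M0 t x : (forall y, Fmax 0 y <= M0) -> 0 <= t <= T ->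
  Fmax t x <= M0 * exp t.
Proof.
  intros H0 Ht. apply Rle_plus_epsilon. intros d Hd.
  pose proof (exp_pos (2 * t)) as Hexp.
  pose proof (invariants_max_below_barrier M0 (d / exp (2 * t)) t x
                (Rdiv_lt_0_compat _ _ Hd Hexp) H0 Ht) as Hlt.
  unfold barrier in Hlt. replace (d / exp (2 * t) * exp (2 * t)) with d in Hlt by (field; lra).
  lra.
Qed.

Lemma h_le_vartheta_exp M0 t x : (forall y, Fmax 0 y <= M0) -> 0 <= t <= T ->
  h t x <= vartheta gamma (M0 * exp t).
Proof.
  intros H0 Ht. apply le_vartheta; [exact Hgamma | apply Hpos, Ht | |].
  - apply Rmult_le_pos; [|left; apply exp_pos].
    eapply Rle_trans; [apply invariants_max_nonneg | apply (H0 0)].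
  - eapply Rle_trans; [apply le_invariants_max_mid | apply invariants_max_le_exp; assumption].
Qed.

End Euler_system.

Lemma supR_ub g M : supR g = Finite M -> forall x, g x <= M.
Proof.
  intros Hsup x. destruct (Lub_Rbar_correct (fun z => exists x, z = g x)) as [Hub _].
  unfold supR in Hsup. rewrite Hsup in Hub. exact (Hub (g x) (ex_intro _ x eq_refl)).
Qed.

Lemma supR_le g B : (forall x, g x <= B) -> Rbar_le (supR g) (Finite B).
Proof.
  intros HB. apply (proj2 (Lub_Rbar_correct _)). intros z [x ->]. apply HB.
Qed.

Theorem lemma2p1
  (gamma T : R) (h u v ht hx ut ux vt vx : R -> R -> R) :
  1 <= gamma -> 0 < T ->
  C1_strip T h ht hx -> C1_strip T u ut ux -> C1_strip T v vt vx ->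
  (forall t x, 0 <= t <= T -> 0 < h t x) ->
  (* the system *)
  (forall t x, 0 <= t <= T -> ht t x + (h t x) ^ 2 * ux t x = 0) ->
  (forall t x, 0 <= t <= T ->
     ut t x + Derive (fun y => Rpower (h t y) gamma / gamma) x - v t x = 0) ->
  (forall t x, 0 <= t <= T -> vt t x + u t x = 0) ->
  (* Z_0^sharp finite and positive *)
  (exists z, supR (fun x => Rmax (Zj gamma 1 h hx ux 0 x) (Zj gamma 2 h hx ux 0 x))
               = Finite z /\ 0 < z) ->
  (* omega_0^sharp finite and positive *)
  (exists w, supR (fun x => / h 0 x + vx 0 x) = Finite w /\ 0 < w) ->
  (* inf h_0 finite and positive *)
  (exists a, infR (fun x => h 0 x) = Finite a /\ 0 < a) ->
  (* sup {h_0, |u_0|, |v_0|} finite and positive *)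
  (exists b, supR (fun x => Rmax (h 0 x) (Rmax (Rabs (u 0 x)) (Rabs (v 0 x))))
               = Finite b /\ 0 < b) ->
  forall M0 : R,
  supR (fun x => Rmax (Rabs (RI1 gamma h u 0 x))
                   (Rmax (Rabs (RI2 gamma h u 0 x)) (Rabs (RI3 v 0 x)))) = Finite M0 ->
  forall t, 0 <= t <= T ->
    Rbar_le (supR (fun x => Rmax (Rabs (RI1 gamma h u t x))
                   (Rmax (Rabs (RI2 gamma h u t x)) (Rabs (RI3 v t x)))))
            (Finite (M0 * exp t)) /\
    Rbar_le (supR (fun x => h t x)) (Finite (vartheta gamma (M0 * exp t))).
Proof.
  intros Hg _ Ch Cu Cv Hpos Hmass Hmom Hrot _ _ _ _ M0 HM0 t Ht.
  assert (Hinv : forall s y, 0 <= s <= T ->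
    Rmax (Rabs (RI1 gamma h u s y)) (Rmax (Rabs (RI2 gamma h u s y)) (Rabs (RI3 v s y)))
    = invariants_max (u s y) (Kclosed gamma (h s y)) (v s y)).
  { intros s y Hs. unfold RI1, RI2, RI3. rewrite Kfun_Kclosed by auto. reflexivity. }
  assert (Hinit : forall y, invariants_max (u 0 y) (Kclosed gamma (h 0 y)) (v 0 y) <= M0).
  { intros y. rewrite <- Hinv by lra. apply (supR_ub _ _ HM0). }
  split; apply supR_le; intros x.
  - rewrite Hinv by exact Ht.
    apply (invariants_max_le_exp gamma T h u v ht hx ut ux vt vx); assumption.
  - apply (h_le_vartheta_exp gamma T h u v ht hx ut ux vt vx); assumption.
Qed.
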